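(* Let $Y$ be a well-tempered stratified set and $X$ any stratified set. Then every stratified map $h:X\circledast\Delta[1]_t\to Y$ factors through the projection $\pi_X:X\circledast\Delta[1]_t\to X$, i.e. there is a stratified map $\hat h:X\to Y$ with $h=\hat h\circ\pi_X$.
   Context: $[n]=\{0<\dots<n\}$; simplicial operators are order-preserving maps; $\sigma_k:[n+1]\to[n]$ is the degeneracy operator hitting $k$ twice. A stratified set is a simplicial set with a set of thin simplices containing every degenerate simplex and no $0$-simplex; stratified maps preserve thinness. $\Delta[1]_t$ is the standard $1$-simplex with all simplices of positive dimension thin. $X\circledast Y$ is the product: $n$-simplices are pairs $(x,y)$, operators act componentwise, thin iff both components thin; $\pi_X$ is the first projection. An $n$-simplex $x$ of a stratified set is pre-degenerate at $k$ ($0\le k<n$) if $x\cdot\alpha$ is thin for every operator $\alpha:[m]\to[n]$ whose image contains $k$ and $k+1$; $x$ is degenerate at $k$ if $x=x'\cdot\sigma_k$ for some simplex $x'$. A stratified set is well-tempered if every simplex pre-degenerate at $k$ is degenerate at $k$. *)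

From mathcomp Require Import all_boot.
From mathcomp Require Import zify.
Set Implicit Arguments. Unset Strict Implicit. Unset Printing Implicit Defensive.

(** Simplicial operators [m] -> [n]: order-preserving maps 'I_m.+1 -> 'I_n.+1. *)
Definition is_op (m n : nat) (f : {ffun 'I_m.+1 -> 'I_n.+1}) : bool :=
  [forall i : 'I_m.+1, forall j : 'I_m.+1, (i <= j) ==> (f i <= f j)].

Definition op (m n : nat) := {f : {ffun 'I_m.+1 -> 'I_n.+1} | is_op f}.

Lemma op_mono m n (a : op m n) (i j : 'I_m.+1) : i <= j -> val a i <= val a j.
Proof.
move=> hij; have := valP a; rewrite /is_op => /forallP /(_ i) /forallP /(_ j) /implyP.
exact.
Qed.

Lemma idop_proof n : is_op [ffun i : 'I_n.+1 => i].
Proof. by apply/forallP=> i; apply/forallP=> j; apply/implyP; rewrite !ffunE. Qed.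

Definition idop n : op n n := exist (fun f => is_op f) _ (idop_proof n).

Lemma compop_proof m n p (g : op n p) (f : op m n) :
  is_op [ffun i : 'I_m.+1 => val g (val f i)].
Proof.
apply/forallP=> i; apply/forallP=> j; apply/implyP=> hij; rewrite !ffunE.
by apply: op_mono; apply: op_mono.
Qed.

Definition compop m n p (g : op n p) (f : op m n) : op m p :=
  exist (fun f => is_op f) _ (compop_proof g f).

Lemma sigma_proof n (k : 'I_n.+1) :
  is_op [ffun i : 'I_n.+2 => inord (if i <= k then (i : nat) else i.-1) : 'I_n.+1].
Proof.
apply/forallP=> i; apply/forallP=> j; apply/implyP=> hij; rewrite !ffunE.
have hi := ltn_ord i; have hj := ltn_ord j; have hk := ltn_ord k.
rewrite !inordK; by repeat case: ifP; lia.
Qed.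

Definition sigma n (k : 'I_n.+1) : op n.+1 n := exist (fun f => is_op f) _ (sigma_proof k).

(** Simplicial sets, with right action x . alpha written [act alpha x]. *)
Record sSet := SSet {
  simp :> nat -> Type;
  act : forall m n, op m n -> simp n -> simp m;
  act_id : forall n (x : simp n), act (idop n) x = x;
  act_comp : forall m n p (f : op m n) (g : op n p) (x : simp p),
      act (compop g f) x = act f (act g x) }.

(** Stratified sets: thin simplices include all degenerate ones and no 0-simplex.
    (Every degenerate simplex is of the form x . sigma_k.) *)
Record strat := Strat {
  sset :> sSet;
  thin : forall n, sset n -> Prop;
  thin_degen : forall n (k : 'I_n.+1) (x : sset n), thin (act (sigma k) x);
  thin_0 : forall x : sset 0, ~ thin x }.

Record smap (X Y : strat) := SMap {
  smap_fun : forall n, X n -> Y n;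
  smap_nat : forall m n (a : op m n) (x : X n),
      smap_fun (act a x) = act a (smap_fun x);
  smap_thin : forall n (x : X n), thin x -> thin (smap_fun x) }.

Definition prod_sset (X Y : sSet) : sSet.
Proof.
refine (@SSet (fun n => (X n * Y n)%type)
          (fun m n a p => (act a p.1, act a p.2)) _ _).
- by move=> n [x y] /=; rewrite !act_id.
- by move=> m n p f g [x y] /=; rewrite !act_comp.
Defined.

Definition prod_strat (X Y : strat) : strat.
Proof.
refine (@Strat (prod_sset X Y) (fun n p => thin p.1 /\ thin p.2) _ _).
- by move=> n k [x y] /=; split; apply: thin_degen.
- by move=> [x y] [hx _]; exact: (thin_0 hx).
Defined.

Notation "X ⊛ Y" := (prod_strat X Y) (at level 40).

Definition Delta1 : sSet.
Proof.
refine (@SSet (fun n => op n 1) (fun m n a f => compop f a) _ _).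
- by move=> n f; apply: val_inj; apply/ffunP=> i; rewrite !ffunE.
- by move=> m n p f g x; apply: val_inj; apply/ffunP=> i; rewrite !ffunE.
Defined.

Definition Delta1_t : strat.
Proof.
refine (@Strat Delta1 (fun n _ => 0 < n) _ _).
- by [].
- by [].
Defined.

Definition proj (X Y : strat) : smap (X ⊛ Y) X.
Proof.
refine (@SMap (X ⊛ Y) X (fun n p => p.1) _ _).
- by [].
- by move=> n [x y] [].
Defined.

Definition predegen (Y : strat) n (y : Y n.+1) (k : 'I_n.+1) : Prop :=
  forall m (a : op m n.+1),
    (exists i, nat_of_ord (val a i) = k) ->
    (exists i, nat_of_ord (val a i) = k.+1) ->
    thin (act a y).

Definition degen_at (Y : strat) n (y : Y n.+1) (k : 'I_n.+1) : Prop :=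
  exists y' : Y n, y = act (sigma k) y'.

Definition well_tempered (Y : strat) : Prop :=
  forall n (y : Y n.+1) (k : 'I_n.+1), predegen y k -> degen_at y k.

From mathcomp Require Import all_boot.
From mathcomp Require Import zify.
Set Implicit Arguments. Unset Strict Implicit. Unset Printing Implicit Defensive.

(* An operator [n] -> [1] is a step function jumping from 0 to 1 at some j <= n+1,
   and h (x, jump at k) = h (x, jump at k+1): both are faces of
   h (x.σ_k, jump at k+1), which is pre-degenerate at k because every operator
   hitting k and k+1 makes the first component degenerate and has positive
   dimension.  Well-temperedness makes it degenerate at k, so the two faces agree.
   Hence h (x, y) = h (x, jump at n+1), and the jump at n+1 is the constant
   operator at vertex 0, which is natural in x. *)

Lemma face_proof n (j : nat) :
  is_op [ffun i : 'I_n.+1 => (inord (if i < j then (i : nat) else i.+1) : 'I_n.+2)].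
Proof.
apply/forallP=> i; apply/forallP=> i'; apply/implyP=> hii; rewrite !ffunE.
have hi := ltn_ord i; have hi' := ltn_ord i'.
by rewrite !inordK; repeat case: ifP; lia.
Qed.

Definition face n j : op n n.+1 := exist (fun f => is_op f) _ (face_proof n j).

Lemma sigma_face n (k : 'I_n.+1) (j : nat) : (j == k) || (j == k.+1) ->
  compop (sigma k) (face n j) = idop n.
Proof.
move=> hj; apply: val_inj; apply/ffunP=> i; rewrite /= !ffunE.
have hi := ltn_ord i; have hk := ltn_ord k.
by apply: val_inj; rewrite /= !inordK; repeat case: ifP; lia.
Qed.

Lemma op_factor_sigma m n (f : op m.+1 n) (k : 'I_m.+1) :
  val f (inord k) = val f (inord k.+1) -> f = compop (compop f (face m k.+1)) (sigma k).
Proof.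
move=> hf; apply: val_inj; apply/ffunP=> i; rewrite /= !ffunE.
have hi := ltn_ord i; have hk := ltn_ord k.
case: (eqVneq (i : nat) k.+1) => hik.
- have -> : i = inord k.+1 by apply: val_inj; rewrite /= inordK //; lia.
  rewrite -hf; congr (val f _); apply: val_inj.
  by rewrite /= !inordK; repeat case: ifP; lia.
- congr (val f _); apply: val_inj.
  by rewrite /= !inordK; repeat case: ifP; lia.
Qed.

Lemma thin_act_noninj (X : strat) m n (f : op m n) (x : X n) (i1 i2 : 'I_m.+1) :
  i1 < i2 -> val f i1 = val f i2 -> thin (act f x).
Proof.
case: m f i1 i2 => [|m] f i1 i2 hlt heq; first by have := ltn_ord i2; lia.
have hi2 := ltn_ord i2.
have hk : i1 < m.+1 by lia.
have e1 : inord (Ordinal hk) = i1 by apply: val_inj; rewrite /= inordK.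
have hf : val f (inord (Ordinal hk)) = val f (inord (Ordinal hk).+1).
  rewrite e1; apply/eqP; rewrite eqE /= eqn_leq.
  apply/andP; split; last rewrite heq; apply: op_mono; rewrite /= inordK //; lia.
by rewrite (op_factor_sigma hf) act_comp; apply: thin_degen.
Qed.

Lemma step_proof n (j : nat) :
  is_op [ffun i : 'I_n.+1 => (inord (if i < j then 0 else 1) : 'I_2)].
Proof.
apply/forallP=> i; apply/forallP=> i'; apply/implyP=> hii; rewrite !ffunE.
by rewrite !inordK; repeat case: ifP; lia.
Qed.

Definition step n j : op n 1 := exist (fun f => is_op f) _ (step_proof n j).

Lemma step_face n (k j : nat) : (j == k) || (j == k.+1) ->
  compop (step n.+1 k.+1) (face n j) = step n j.
Proof.
move=> hj; apply: val_inj; apply/ffunP=> i; rewrite /= !ffunE.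
have hi := ltn_ord i.
by apply: val_inj; rewrite /= !inordK; repeat case: ifP; lia.
Qed.

Lemma step_top_comp m n (a : op m n) : compop (step n n.+1) a = step m m.+1.
Proof. by apply: val_inj; apply/ffunP=> i; rewrite /= !ffunE !ltn_ord. Qed.

Lemma op1_step n (y : op n 1) : exists2 j, j <= n.+1 & y = step n j.
Proof.
have ex : exists i, (n < i) || (val y (inord i) != ord0) by exists n.+1; rewrite ltnSn.
case: (ex_minnP ex) => j Pj minj; exists j; first by apply: minj; rewrite ltnSn.
apply: val_inj; apply/ffunP=> i; rewrite ffunE.
have hi := ltn_ord i.
case: ifP => hij.
- have : ~~ ((n < i) || (val y (inord i) != ord0)) by apply/negP => /minj; lia.
  rewrite negb_or negbK inord_val => /andP [_ /eqP ->].
  by apply: val_inj; rewrite /= inordK.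
- have hjn : ~~ (n < j) by lia.
  move: Pj; rewrite (negbTE hjn) /= => hyj.
  have : val y (inord j) <= val y i by apply: op_mono; rewrite inordK; lia.
  move: hyj; rewrite -(inj_eq val_inj) /= => hyj hle.
  have hyi := ltn_ord (val y i); have hyi' := ltn_ord (sval y i).
  by apply: val_inj; rewrite /= inordK //; lia.
Qed.

Lemma eq_succ_upto (T : Type) (f : nat -> T) (N : nat) :
  (forall k, k < N -> f k = f k.+1) -> forall j, j <= N -> f j = f N.
Proof.
elim: N => [|N IH] hf j hj; first by have -> : j = 0 by lia.
case: (eqVneq j N.+1) => [-> //|hjN].
rewrite -(hf N) // IH // => [k hk|]; last by lia.
by apply: hf; lia.
Qed.

Section Factorisation.

Variables (Y X : strat) (h : smap (X ⊛ Delta1_t) Y).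

Definition at_step n (x : X n) j : Y n := smap_fun h ((x, step n j) : (X ⊛ Delta1_t) n).

Lemma predegen_at_step n (x : X n) (k : 'I_n.+1) :
  predegen (at_step (act (sigma k) x) k.+1) k.
Proof.
move=> m a [i1 h1] [i2 h2]; rewrite /at_step -smap_nat; apply: smap_thin.
have hi2 := ltn_ord i2; have hk := ltn_ord k.
have hlt : i1 < i2 by rewrite ltnNge; apply/negP=> /(op_mono a); lia.
split=> /=; last by lia.
rewrite -act_comp; apply: (thin_act_noninj _ hlt); apply: val_inj.
by rewrite /= !ffunE /= h1 h2 !inordK; repeat case: ifP; lia.
Qed.

Lemma at_step_face n (x : X n) (k : 'I_n.+1) (j : nat) : (j == k) || (j == k.+1) ->
  act (face n j) (at_step (act (sigma k) x) k.+1) = at_step x j.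
Proof.
move=> hj; rewrite /at_step -smap_nat /=.
by rewrite -act_comp sigma_face // act_id step_face.
Qed.

Lemma at_step_succ (hY : well_tempered Y) n (x : X n) (k : 'I_n.+1) :
  at_step x k = at_step x k.+1.
Proof.
have [y' ey] := hY _ _ _ (@predegen_at_step n x k).
have face_y' (j : nat) : (j == k) || (j == k.+1) -> at_step x j = y'.
  by move=> hj; rewrite -(at_step_face x hj) ey -act_comp sigma_face // act_id.
by rewrite !face_y' ?eqxx ?orbT.
Qed.

Lemma at_step_top (hY : well_tempered Y) n (x : X n) j :
  j <= n.+1 -> at_step x j = at_step x n.+1.
Proof. by apply: eq_succ_upto => k hk; apply: (at_step_succ hY x (Ordinal hk)). Qed.

Lemma at_step_top_nat m n (a : op m n) (x : X n) :
  at_step (act a x) m.+1 = act a (at_step x n.+1).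
Proof. by rewrite /at_step -smap_nat /= step_top_comp. Qed.

Lemma at_step_top_thin n (x : X n) : thin x -> thin (at_step x n.+1).
Proof.
case: n x => [|n] x hx; first by case: (thin_0 hx).
by apply: smap_thin; split.
Qed.

Definition factor_smap : smap X Y := SMap at_step_top_nat at_step_top_thin.

End Factorisation.

Theorem mainTheorem11 (Y X : strat) (hY : well_tempered Y)
  (h : smap (X ⊛ Delta1_t) Y) :
  exists hh : smap X Y,
    forall n (p : (X ⊛ Delta1_t) n),
      smap_fun h p = smap_fun hh (smap_fun (proj X Delta1_t) p).
Proof.
exists (factor_smap h) => n [x y] /=.
have [j hj ->] := op1_step y.
exact: (at_step_top h hY x hj).
Qed.
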